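(* Assume (H1). For every integer $h\ge1$, $N_1(\mathcal{M}^{(h)})$ and $N_2(\mathcal{M}^{(h)})$ have the same law, and there exist $c_1>0,c_2>0$ such that for all $h$, $$\mathbb{P}(\mathcal{M}^{(h)}\notin J_h)\le c_1\exp(-c_2h^{1/3}).$$
   Context: (H1): $\mu=(\mu_k)_{k\ge0}$ probability on $\mathbb{N}$ with $\mu_0+\mu_1\ne1$, $\sum_kk\mu_k=1$, $\sum_{k\le K}\mu_k=1$ for some integer $K>0$; $\sigma_\mu^2$ is its variance. $I_K=\{(k,j):1\le j\le k\le K\}$; $\mathcal{M}^{(h)}$ is multinomial with parameters $h$ and $(p_{k,j})_{(k,j)\in I_K}$, $p_{k,j}=\mu_k$. $\mathbb{N}^I[h]=\{c\in\mathbb{N}^{I_K}:\sum c_i=h\}$. For $\mathbf{a}\in\mathbb{R}^{I_K}$, $N_1(\mathbf{a})=\sum(j-1)\mathbf{a}_{k,j}$, $N_2(\mathbf{a})=\sum(k-j)\mathbf{a}_{k,j}$. $J_h=\{\mathbf{a}\in\mathbb{N}^I[h]:(N_1(\mathbf{a}),N_2(\mathbf{a}))\in[\tfrac{\sigma_\mu^2}{2}h-h^{2/3},\tfrac{\sigma_\mu^2}{2}h+h^{2/3}]^2\}$. *)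

From HB Require Import structures.
From mathcomp Require Import all_boot all_order all_algebra.
From mathcomp Require Import all_classical all_reals all_analysis.
Set Implicit Arguments. Unset Strict Implicit. Unset Printing Implicit Defensive.
Import Order.TTheory GRing.Theory Num.Theory.
Local Open Scope ring_scope.

Definition IK (K : nat) : Type :=
  {p : 'I_K.+1 * 'I_K.+1 | (0 < p.2)%N && (p.2 <= p.1)%N}.

Definition pK (R : realType) (K : nat) (mu : nat -> R) (i : IK K) : R :=
  mu (val i).1.

Definition N1 (K : nat) (a : IK K -> nat) : nat :=
  (\sum_(i : IK K) ((val i).2 - 1) * a i)%N.
Definition N2 (K : nat) (a : IK K -> nat) : nat :=
  (\sum_(i : IK K) ((val i).1 - (val i).2) * a i)%N.

Definition multinom_pmf (R : realType) (K h : nat) (p : IK K -> R)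
    (c : IK K -> nat) : R :=
  if (\sum_(i : IK K) c i)%N == h then
    (h`!)%:R / (\prod_(i : IK K) (c i)`!)%:R * \prod_(i : IK K) p i ^+ c i
  else 0.

(* P(M^(h) \in A) for M^(h) multinomial(h, p).  Every point of N^I[h] has
   all coordinates <= h, so summing over {ffun IK K -> 'I_h.+1} covers the
   whole support exactly once. *)
Definition multinom_prob (R : realType) (K h : nat) (p : IK K -> R)
    (A : (IK K -> nat) -> bool) : R :=
  \sum_(c : {ffun IK K -> 'I_h.+1})
     (if A (fun i => nat_of_ord (c i)) then
        multinom_pmf h p (fun i => nat_of_ord (c i)) else 0).

(* variance of mu (supported on {0..K}, mean 1) *)
Definition sigma2 (R : realType) (K : nat) (mu : nat -> R) : R :=
  \sum_(k < K.+1) (k%:R - 1) ^+ 2 * mu k.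

(* a \in J_h (the condition sum a = h is automatic on the multinomial support,
   but we include it for faithfulness) *)
Definition inJ (R : realType) (K h : nat) (s2 : R) (a : IK K -> nat) : bool :=
  let lo := s2 / 2 * h%:R - powR h%:R (2 / 3) in
  let hi := s2 / 2 * h%:R + powR h%:R (2 / 3) in
  [&& (\sum_(i : IK K) a i)%N == h,
      lo <= (N1 a)%:R, (N1 a)%:R <= hi,
      lo <= (N2 a)%:R & (N2 a)%:R <= hi].

(* Inside each block {(k, j) : 1 <= j <= k}, the reflection j |-> k + 1 - j
   preserves the parameters p_{k,j} = mu_k and exchanges the weights j - 1
   and k - j, so N_1(M^(h)) and N_2(M^(h)) have the same law.  Both are sums
   sum_i w_i M_i with integer weights 0 <= w_i <= K and mean h sigma^2 / 2.
   By the multinomial theorem the centred exponential moment is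
   (sum_i p_i e^{t (w_i - m)})^h, which e^x <= 1 + x + 2 x^2 (for x <= 1/2)
   bounds by exp (2 h t^2 K^2).  Chernoff's bound with t = 1 / (4 K^2 h^{1/3})
   then gives exp (- h^{1/3} / (8 K^2)) for each of the four one-sided
   deviations of size h^{2/3}, whence c_1 = 4 and c_2 = 1 / (8 K^2). *)

From HB Require Import structures.
From mathcomp Require Import all_boot all_order all_algebra.
From mathcomp Require Import all_classical all_reals all_analysis.
From mathcomp Require Import ring lra zify.
Import Order.TTheory GRing.Theory Num.Theory.
Local Open Scope ring_scope.

Set Implicit Arguments. Unset Strict Implicit.

Section ShiftCoordinate.
Variables (I : finType) (m : nat).
Implicit Types (c : {ffun I -> 'I_m.+1}) (i j : I).

Definition ffun_incr i c : {ffun I -> 'I_m.+1} :=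
  [ffun j => if j == i then inord (c j).+1 else c j].
Definition ffun_decr i c : {ffun I -> 'I_m.+1} :=
  [ffun j => if j == i then inord (c j).-1 else c j].

Lemma ffun_incrE i c j : (c i < m)%N -> ffun_incr i c j = (c j + (j == i))%N :> nat.
Proof.
move=> ci_lt; rewrite ffunE; case: eqP => [->|_]; last by rewrite addn0.
by rewrite inordK ?addn1.
Qed.

Lemma sum_ffun_incr i c : (c i < m)%N ->
  (\sum_j ffun_incr i c j = (\sum_j c j).+1)%N.
Proof.
move=> ci_lt; under eq_bigr do rewrite ffun_incrE //.
rewrite big_split /= -[RHS]addn1; congr (_ + _)%N.
by rewrite (bigD1 i) //= eqxx big1 // => j /negbTE ->.
Qed.

Lemma ffun_incrK i c : (c i < m)%N -> ffun_decr i (ffun_incr i c) = c.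
Proof.
move=> ci_lt; apply/ffunP => j; rewrite ffunE.
case: eqP => [->|/eqP/negbTE ne]; last by rewrite ffunE ne.
by apply/val_inj => /=; rewrite ffun_incrE // eqxx addn1 inordK // ltnS ltnW.
Qed.

Lemma ffun_decrK i c : (0 < c i)%N -> ffun_incr i (ffun_decr i c) = c.
Proof.
move=> ci_gt0; apply/ffunP => j; rewrite !ffunE.
case: eqP => [->|//]; apply/val_inj => /=.
have ci_pred_lt : ((c i).-1 < m.+1)%N by rewrite (leq_ltn_trans (leq_pred _)).
by rewrite (inordK ci_pred_lt) prednK // inordK.
Qed.

Lemma sum_shift_coord (R : nmodType) h i (F : {ffun I -> 'I_m.+1} -> R) :
  (h < m)%N ->
  \sum_(c : {ffun I -> 'I_m.+1} | (\sum_j c j == h.+1)%N && (0 < c i)%N) F c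
  = \sum_(c : {ffun I -> 'I_m.+1} | (\sum_j c j == h)%N) F (ffun_incr i c).
Proof.
move=> h_lt; rewrite (reindex_onto (ffun_incr i) (ffun_decr i)); last first.
  by move=> c /andP[_]; apply: ffun_decrK.
apply: eq_bigl => c; have [ci_lt|ci_ge] := ltnP (c i) m.
  rewrite sum_ffun_incr // ffun_incrE // eqxx addn1 ffun_incrK // eqxx.
  by rewrite eqSS ltn0Sn !andbT.
have ci_eq : nat_of_ord (c i) = m by apply/eqP; rewrite eqn_leq -ltnS ltn_ord.
have -> : nat_of_ord (ffun_incr i c i) = 0%N.
  by rewrite ffunE eqxx /= /inord val_insubd ci_eq ltnn.
rewrite andbF /=; apply/esym/negbTE; apply: contraTN h_lt => /eqP sum_c.
by rewrite -leqNgt -ci_eq -sum_c (bigD1 i) //= leq_addr.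
Qed.

End ShiftCoordinate.

Section MultinomialTheorem.
Variables (R : numFieldType) (I : finType) (y : I -> R).

Definition multinom_term h (c : I -> nat) : R :=
  h`!%:R / (\prod_i (c i)`!)%:R * \prod_i y i ^+ c i.

Lemma multinom_termS h (c : I -> nat) : (\sum_i c i)%N = h.+1 ->
  multinom_term h.+1 c = \sum_i (c i)%:R * multinom_term h c.
Proof.
by move=> sum_c; rewrite -mulr_suml -natr_sum sum_c /multinom_term factS natrM !mulrA.
Qed.

Lemma multinom_term_incr m h i (c : {ffun I -> 'I_m.+1}) : (c i < m)%N ->
  (ffun_incr i c i)%:R * multinom_term h (fun j => ffun_incr i c j)
  = multinom_term h (fun j => c j) * y i.
Proof.
move=> ci_lt; have split_i (F : I -> R) : \prod_j F j = F i * \prod_(j | j != i) F j.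
  exact: bigD1.
have others (F : I -> nat -> R) :
    \prod_(j | j != i) F j (ffun_incr i c j) = \prod_(j | j != i) F j (c j).
  by apply: eq_bigr => j /negbTE j_ne; rewrite ffun_incrE // j_ne addn0.
rewrite /multinom_term !natr_prod !split_i.
rewrite (others (fun _ n => n`!%:R)) (others (fun j n => y j ^+ n)).
rewrite ffun_incrE // eqxx addn1 factS natrM exprS.
have fact_neq0 n : n`!%:R != 0 :> R by rewrite pnatr_eq0 -lt0n fact_gt0.
have prod_neq0 : \prod_(j | j != i) (c j)`!%:R != 0 :> R.
  by apply/prodf_neq0 => j _.
by field; rewrite prod_neq0 fact_neq0 addrC natr1 pnatr_eq0.
Qed.

Lemma sum_multinom_term m h : (h <= m)%N ->
  \sum_(c : {ffun I -> 'I_m.+1} | (\sum_i c i == h)%N)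
     multinom_term h (fun i => c i) = (\sum_i y i) ^+ h.
Proof.
elim: h => [_|h IH h_lt].
  rewrite (big_pred1 [ffun => ord0]) => [|c]; last first.
    rewrite sum_nat_eq0 /=; apply/forallP/eqP => [c0|-> i]; last by rewrite ffunE.
    by apply/ffunP => i; apply/val_inj; rewrite ffunE; apply/eqP/c0.
  by rewrite expr0 /multinom_term !big1 ?divr1 ?mulr1 // => i _; rewrite ffunE.
under eq_bigr => c /eqP sum_c do rewrite multinom_termS //.
rewrite exchange_big exprSr mulr_sumr /=; apply: eq_bigr => i _.
rewrite (bigID (fun c : {ffun I -> 'I_m.+1} => (0 < c i)%N)) /=.
rewrite addrC big1 ?add0r => [|c /andP[_]]; last first.
  by rewrite lt0n negbK => /eqP ->; rewrite mul0r.
rewrite (@sum_shift_coord _ _ _ h i (fun c => (c i)%:R * multinom_term h (fun j => c j))) //.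
rewrite -IH ?(ltnW h_lt) // mulr_suml.
apply: eq_bigr => c /eqP sum_c; apply: multinom_term_incr.
by rewrite (leq_ltn_trans _ h_lt) // -sum_c (bigD1 i) //= leq_addr.
Qed.

End MultinomialTheorem.

Section MultinomProb.
Variables (R : realType) (K h : nat) (p : IK K -> R).

Local Notation coords := {ffun IK K -> 'I_h.+1}.

Lemma multinom_pmf_perm (s : IK K -> IK K) (a : IK K -> nat) :
  injective s -> (forall i, p (s i) = p i) ->
  multinom_pmf h p (fun i => a (s i)) = multinom_pmf h p a.
Proof.
move=> s_inj ps; rewrite /multinom_pmf.
have reindex (T : Type) (idx : T) (op : Monoid.com_law idx) (F : IK K -> T) :
    \big[op/idx]_i F (s i) = \big[op/idx]_i F i.
  by rewrite [RHS](reindex_inj s_inj).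
rewrite (reindex _ _ _ a) (reindex _ _ _ (fun i => (a i)`!)).
rewrite -(reindex _ _ _ (fun i => p i ^+ a i)).
by congr (if _ then _ * _ else _); apply: eq_bigr => i _; rewrite ps.
Qed.

Lemma multinom_prob_perm (s : IK K -> IK K) (A : (IK K -> nat) -> bool) :
  injective s -> (forall i, p (s i) = p i) ->
  multinom_prob h p (fun a => A (fun i => a (s i))) = multinom_prob h p A.
Proof.
move=> s_inj ps; have [s' sK s'K] := injF_bij s_inj.
have comp_inj : injective (fun c : coords => [ffun i => c (s i)]).
  move=> c1 c2 /ffunP eq_c; apply/ffunP => i.
  by have := eq_c (s' i); rewrite !ffunE s'K.
rewrite /multinom_prob [RHS](reindex_inj comp_inj); apply: eq_bigr => c _ /=.
have -> : (fun i => nat_of_ord ([ffun i => c (s i)] i)) = (fun i => c (s i)).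
  by apply: funext => i; rewrite ffunE.
by rewrite (multinom_pmf_perm (fun i => nat_of_ord (c i)) s_inj ps).
Qed.

Hypothesis p_ge0 : forall i, 0 <= p i.

Lemma multinom_pmf_ge0 (a : IK K -> nat) : 0 <= multinom_pmf h p a.
Proof.
rewrite /multinom_pmf; case: ifP => // _.
by rewrite mulr_ge0 ?divr_ge0 // prodr_ge0 // => i _; rewrite exprn_ge0.
Qed.

Lemma multinom_prob_le_sum (A : (IK K -> nat) -> bool) Bs :
  (forall a, (\sum_i a i)%N = h -> A a -> has (fun B => B a) Bs) ->
  multinom_prob h p A <= \sum_(B <- Bs) multinom_prob h p B.
Proof.
move=> AB; rewrite /multinom_prob exchange_big /=; apply: ler_sum => c _.
set a := fun i => nat_of_ord (c i).
have sum_ge0 Cs : 0 <= \sum_(B <- Cs) (if B a then multinom_pmf h p a else 0).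
  by apply: sumr_ge0 => B _; case: ifP => // _; apply: multinom_pmf_ge0.
case Aa: (A a) => //; case: (eqVneq (\sum_i a i)%N h) => [sum_a|]; last first.
  by move=> /negbTE ne; rewrite {1}/multinom_pmf ne.
move: (AB a sum_a Aa); elim: Bs {AB} => //= B Bs IH; rewrite big_cons.
case: (B a) => /= [_|/IH]; first by rewrite lerDl.
by rewrite add0r.
Qed.

Lemma multinom_prob_exp_markov (A : (IK K -> nat) -> bool) (f : (IK K -> nat) -> R) r :
  (forall a, A a -> r <= f a) ->
  multinom_prob h p A
  <= expR (- r) * \sum_(c : coords) multinom_pmf h p (fun i => c i) * expR (f (fun i => c i)).
Proof.
move=> Af; rewrite /multinom_prob mulr_sumr; apply: ler_sum => c _.
set a := fun i => nat_of_ord (c i).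
have pmf_ge0 := multinom_pmf_ge0 a.
rewrite mulrCA -expRD; case: ifP => [/Af r_le|_]; last first.
  by rewrite mulr_ge0 ?expR_ge0.
rewrite -[X in X <= _]mulr1 ler_wpM2l // -expR0 ler_expR; lra.
Qed.

Lemma multinom_mgf (g : IK K -> R) :
  \sum_(c : coords) multinom_pmf h p (fun i => c i) * expR (\sum_i g i * (c i)%:R)
  = (\sum_i p i * expR (g i)) ^+ h.
Proof.
rewrite -(sum_multinom_term _ (leqnn h)) [RHS]big_mkcond; apply: eq_bigr => c _.
rewrite /multinom_pmf; case: ifP => _; last by rewrite mul0r.
rewrite /multinom_term -[_ * _ * expR _]mulrA expR_sum -big_split /=; congr (_ * _).
by apply: eq_bigr => i _; rewrite expRM_natr exprMn.
Qed.

End MultinomProb.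

Lemma expR_le_quadratic (R : realType) (x : R) :
  x <= 1 / 2 -> expR x <= 1 + x + 2 * x ^+ 2.
Proof.
move=> x_le; have expNx_ge := expR_ge1Dx (- x).
have expK := expRxMexpNx_1 x; have ex_ge0 := expR_ge0 x.
have sq_ge0 : 0 <= x ^+ 2 * (1 - 2 * x) by rewrite mulr_ge0 ?sqr_ge0 //; lra.
have : expR x * (1 - x) <= 1 by rewrite -expK ler_wpM2l //; lra.
nra.
Qed.

Definition scaled_dev_ge (R : realType) K h (w : IK K -> nat) (m t r : R)
    (a : IK K -> nat) : bool :=
  r <= t * ((\sum_i w i * a i)%N%:R - h%:R * m).

Section WeightedCount.
Variables (R : realType) (K h W : nat) (p : IK K -> R) (w : IK K -> nat).
Hypothesis p_ge0 : forall i, 0 <= p i.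
Hypothesis p_sum : \sum_i p i = 1.
Hypothesis w_le : forall i, (w i <= W)%N.

Local Notation coords := {ffun IK K -> 'I_h.+1}.

Definition weight_mean : R := \sum_i p i * (w i)%:R.

Lemma weight_mean_ge0 : 0 <= weight_mean.
Proof. by rewrite sumr_ge0 // => i _; rewrite mulr_ge0. Qed.

Lemma weight_mean_le : weight_mean <= W%:R.
Proof.
have -> : W%:R = \sum_i p i * W%:R :> R by rewrite -mulr_suml p_sum mul1r.
by apply: ler_sum => i _; apply: ler_wpM2l; rewrite // ler_nat.
Qed.

Lemma centered_exp_moment_le t : (t * W%:R) ^+ 2 <= 1 / 4 ->
  \sum_i p i * expR (t * ((w i)%:R - weight_mean)) <= 1 + 2 * (t * W%:R) ^+ 2.
Proof.
move=> tW_le; set m := weight_mean; set v := (t * W%:R) ^+ 2 in tW_le *.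
have factor_le i : expR (t * ((w i)%:R - m)) <= 1 + t * ((w i)%:R - m) + 2 * v.
  have dev_le : (t * ((w i)%:R - m)) ^+ 2 <= v.
    rewrite /v !exprMn ler_wpM2l ?sqr_ge0 //.
    have := weight_mean_ge0; have := weight_mean_le; rewrite -/m => m_le m_ge0.
    have wi_le : (w i)%:R <= W%:R :> R by rewrite ler_nat.
    have wi_ge0 : 0 <= (w i)%:R :> R by [].
    nra.
  apply: le_trans (expR_le_quadratic _) _; last lra.
  set x := t * _ in dev_le *; rewrite expr2 in dev_le; nra.
apply: le_trans (ler_sum _ (fun i _ => ler_wpM2l (p_ge0 i) (factor_le i))) _.
have mean_dev : \sum_i p i * (t * ((w i)%:R - m)) = 0.
  transitivity (t * (m - m * \sum_i p i)); last by rewrite p_sum mulr1 subrr mulr0.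
  rewrite mulr_sumr -sumrB mulr_sumr; apply: eq_bigr => i _; ring.
under eq_bigr do rewrite 2!mulrDr.
by rewrite !big_split /= mean_dev -!mulr_suml p_sum; lra.
Qed.

Lemma centered_mgf_le t : (t * W%:R) ^+ 2 <= 1 / 4 ->
  \sum_(c : coords) multinom_pmf h p (fun i => c i) *
     expR (t * ((\sum_i w i * c i)%N%:R - h%:R * weight_mean))
  <= expR (2 * h%:R * (t * W%:R) ^+ 2).
Proof.
move=> tW_le; set m := weight_mean.
have centered c : (\sum_i c i)%N = h ->
    t * ((\sum_i w i * c i)%N%:R - h%:R * m) = \sum_i t * ((w i)%:R - m) * (c i)%:R.
  move=> <-; rewrite !natr_sum mulr_suml -sumrB mulr_sumr.
  by apply: eq_bigr => i _; rewrite natrM; ring.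
rewrite (eq_bigr (fun c : coords => multinom_pmf h p (fun i => c i) *
    expR (\sum_i t * ((w i)%:R - m) * (c i)%:R))); last first.
  move=> c _; rewrite /multinom_pmf; case: eqP => [/centered ->|_] //.
  by rewrite !mul0r.
rewrite multinom_mgf mulrAC expRM_natr; apply: lerXn2r; rewrite ?nnegrE ?expR_ge0 //.
  by rewrite sumr_ge0 // => i _; rewrite mulr_ge0 ?expR_ge0.
exact: le_trans (centered_exp_moment_le tW_le) (expR_ge1Dx _).
Qed.

Lemma weighted_count_tail t r : (t * W%:R) ^+ 2 <= 1 / 4 ->
  multinom_prob h p (scaled_dev_ge h w weight_mean t r)
  <= expR (2 * h%:R * (t * W%:R) ^+ 2 - r).
Proof.
move=> tW_le; set f := fun a => t * ((\sum_i w i * a i)%N%:R - h%:R * weight_mean).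
apply: le_trans (@multinom_prob_exp_markov _ _ _ _ p_ge0 _ f r (fun a ra => ra)) _.
by rewrite addrC expRD ler_wpM2l ?expR_ge0 ?centered_mgf_le.
Qed.

End WeightedCount.

Section Reflection.
Variable K : nat.
Implicit Types (i : IK K).

Lemma IK_reflect_subproof i :
  let j' := @inord K ((val i).1.+1 - (val i).2) in (0 < j')%N && (j' <= (val i).1)%N.
Proof.
case: i => [[k j] /= /andP[j_gt0 j_le]].
by rewrite inordK; [lia | have := ltn_ord k; lia].
Qed.

(* (k, j) |-> (k, k + 1 - j) exchanges the weights j - 1 and k - j of N_1 and N_2. *)
Definition IK_reflect i : IK K :=
  exist _ ((val i).1, inord ((val i).1.+1 - (val i).2)) (IK_reflect_subproof i).

Lemma IK_reflect2 i : (val (IK_reflect i)).2 = ((val i).1.+1 - (val i).2)%N :> nat.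
Proof.
case: i => [[k j] /= /andP[j_gt0 j_le]].
by rewrite inordK //; have := ltn_ord k; lia.
Qed.

Lemma IK_reflectK : involutive IK_reflect.
Proof.
move=> i; apply/val_inj; case: i => [[k j] /= /andP[j_gt0 j_le]]; congr pair.
by apply/val_inj; rewrite /= !inordK; have := ltn_ord k; lia.
Qed.

Lemma N1_reflect (a : IK K -> nat) : N1 (fun i => a (IK_reflect i)) = N2 a.
Proof.
rewrite /N1 /N2 (reindex_inj (inv_inj IK_reflectK)) /=.
apply: eq_bigr => i _; rewrite IK_reflectK IK_reflect2.
by congr (_ * _)%N; case: i => [[k j] /= /andP[]]; lia.
Qed.

End Reflection.

Lemma multinom_prob_N1_N2 (R : realType) K h (mu : nat -> R) n :
  multinom_prob h (pK mu) (fun a => @N1 K a == n)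
  = multinom_prob h (pK mu) (fun a => @N2 K a == n).
Proof.
rewrite -(@multinom_prob_perm _ _ _ _ (@IK_reflect K) _ (inv_inj (@IK_reflectK K))) //.
by congr multinom_prob; apply: funext => a; rewrite N1_reflect.
Qed.

Lemma sum_ord_natr_double (R : comPzRingType) n :
  2 * \sum_(j < n) (j%:R : R) = n%:R * (n%:R - 1).
Proof.
elim: n => [|n IH]; first by rewrite big_ord0 mulr0 mul0r.
by rewrite big_ord_recr /= mulrDr IH -natr1; ring.
Qed.

Lemma sum_IK (V : nmodType) {K : nat} (F : nat -> nat -> V) :
  \sum_(i : IK K) F (val i).1 (val i).2 = \sum_(k < K.+1) \sum_(j < k) F k j.+1.
Proof.
have -> : \sum_(i : IK K) F (val i).1 (val i).2 =
    \sum_(p : 'I_K.+1 * 'I_K.+1 | (0 < p.2)%N && (p.2 <= p.1)%N) F p.1 p.2.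
  rewrite [RHS](reindex_omap (val : IK K -> _) insub) => [|p Pp]; last by rewrite insubT.
  by apply: eq_bigl => i; rewrite (valP i) valK eqxx.
have -> : \sum_(p : 'I_K.+1 * 'I_K.+1 | (0 < p.2)%N && (p.2 <= p.1)%N) F p.1 p.2 =
    \sum_(k < K.+1) \sum_(j < K.+1 | (0 < j)%N && (j <= k)%N) F k j.
  by rewrite pair_big_dep.
apply: eq_bigr => k _.
rewrite big_mkcond big_ord_recl /= add0r.
rewrite (big_ord_widen_cond K xpredT (fun j => F k j.+1)) ?leq_ord //.
by rewrite [RHS]big_mkcond.
Qed.

Section Moments.
Variables (R : realType) (K : nat) (mu : nat -> R).
Local Notation p := (@pK R K mu).

Definition IK_weight1 (i : IK K) : nat := ((val i).2 - 1)%N.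
Definition IK_weight2 (i : IK K) : nat := ((val i).1 - (val i).2)%N.

Lemma N1E (a : IK K -> nat) : N1 a = (\sum_i IK_weight1 i * a i)%N.
Proof. by []. Qed.

Lemma N2E (a : IK K -> nat) : N2 a = (\sum_i IK_weight2 i * a i)%N.
Proof. by []. Qed.

Lemma IK_weight1_le i : (IK_weight1 i <= K)%N.
Proof. by rewrite /IK_weight1; have := ltn_ord (val i).2; lia. Qed.

Lemma IK_weight2_le i : (IK_weight2 i <= K)%N.
Proof. by rewrite /IK_weight2; have := ltn_ord (val i).1; lia. Qed.

Lemma weight_mean_IK_reflect :
  weight_mean p IK_weight2 = weight_mean p IK_weight1.
Proof.
rewrite /weight_mean (reindex_inj (inv_inj (@IK_reflectK K))) /=.
apply: eq_bigr => i _; rewrite /IK_weight1 /IK_weight2 IK_reflect2.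
by congr (_ * _%:R); case: i => [[k j] /= /andP[]]; lia.
Qed.

Hypothesis mu_sum : \sum_(k < K.+1) mu k = 1.
Hypothesis mu_mean : \sum_(k < K.+1) k%:R * mu k = 1.

Lemma pK_sum : \sum_i p i = 1.
Proof.
rewrite /pK -mu_mean (sum_IK (fun k _ => mu k)); apply: eq_bigr => k _.
by rewrite sumr_const card_ord mulr_natl.
Qed.

Lemma weight_mean_IK_weight1 : weight_mean p IK_weight1 = sigma2 K mu / 2.
Proof.
rewrite /weight_mean /IK_weight1 /pK (sum_IK (fun k j => mu k * (j - 1)%N%:R)).
have inner k : \sum_(j < k) mu k * (j.+1 - 1)%N%:R
    = (k%:R - 1) ^+ 2 * mu k / 2 + (k%:R * mu k - mu k) / 2.
  rewrite -mulr_sumr; under eq_bigr do rewrite subn1 /=.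
  have := sum_ord_natr_double R k; set S := \sum_(j < k) _ => S2.
  have -> : S = k%:R * (k%:R - 1) / 2 by rewrite -S2; field.
  by field.
under eq_bigr do rewrite inner.
by rewrite big_split /= -!mulr_suml sumrB mu_mean mu_sum subrr mul0r addr0.
Qed.

Lemma weight_mean_IK_weight2 : weight_mean p IK_weight2 = sigma2 K mu / 2.
Proof. by rewrite weight_mean_IK_reflect weight_mean_IK_weight1. Qed.

End Moments.

Arguments IK_weight1 {K} i.
Arguments IK_weight2 {K} i.

Lemma powR_third_expr3 (R : realType) (x : R) : 0 <= x -> powR x (1 / 3) ^+ 3 = x.
Proof.
move=> x_ge0; rewrite -powR_mulrn ?powR_ge0 // -powRrM.
by rewrite (_ : 1 / 3 * 3%:R = 1) ?powRr1 //; field.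
Qed.

Lemma powR_two_thirds (R : realType) (x : R) : powR x (2 / 3) = powR x (1 / 3) ^+ 2.
Proof.
by rewrite -powR_mulrn ?powR_ge0 // -powRrM (_ : 1 / 3 * 2%:R = 2 / 3) //; field.
Qed.

Lemma chernoff_parameter (R : realType) (k u t : R) :
  1 <= k -> 1 <= u -> t * (4 * k ^+ 2 * u) = 1 ->
  [/\ 0 <= t, (t * k) ^+ 2 <= 1 / 4
     & 2 * u ^+ 3 * (t * k) ^+ 2 - t * u ^+ 2 = - (1 / (8 * k ^+ 2) * u)].
Proof.
move=> k_ge1 u_ge1 t_def.
have X_gt0 : 0 < 4 * k ^+ 2 * u by rewrite !mulr_gt0 ?exprn_gt0 //; lra.
have t_eq : t = 1 / (4 * k ^+ 2 * u).
  by apply: (mulIf (lt0r_neq0 X_gt0)); rewrite t_def divfK ?lt0r_neq0.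
have t_ge0 : 0 <= t by rewrite t_eq divr_ge0 ?ltW.
split => //; last by rewrite t_eq; field; apply/andP; split; apply/eqP; lra.
have ku_ge1 : 1 <= k * u by nra.
have tk_ge0 : 0 <= t * k by rewrite mulr_ge0 //; lra.
have : t * k <= 1 / 4 by nra.
nra.
Qed.

Lemma not_inJ_scaled_dev (R : realType) K h (s t : R) (a : IK K -> nat) :
  0 <= t -> (\sum_i a i)%N = h -> ~~ inJ h s a ->
  has (fun B => B a)
    [:: scaled_dev_ge h IK_weight1 (s / 2) t (t * powR h%:R (2 / 3));
        scaled_dev_ge h IK_weight1 (s / 2) (- t) (t * powR h%:R (2 / 3));
        scaled_dev_ge h IK_weight2 (s / 2) t (t * powR h%:R (2 / 3));
        scaled_dev_ge h IK_weight2 (s / 2) (- t) (t * powR h%:R (2 / 3))].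
Proof.
move=> t_ge0 sum_a; rewrite /inJ sum_a eqxx N1E N2E /= /scaled_dev_ge orbF.
rewrite !negb_and -!ltNge => /or4P[] dev_lt; apply/or4P;
  [apply: Or42 | apply: Or41 | apply: Or44 | apply: Or43]; nra.
Qed.

Unset Implicit Arguments. Set Strict Implicit.

Theorem lemma9 (R : realType) (K : nat) (mu : nat -> R)
  (HK : (0 < K)%N)
  (Hmu_ge0 : forall k, 0 <= mu k)
  (Hmu_supp : forall k, (K < k)%N -> mu k = 0)
  (Hmu_sum : \sum_(k < K.+1) mu k = 1)
  (Hmu_mean : \sum_(k < K.+1) k%:R * mu k = 1)
  (Hmu01 : mu 0%N + mu 1%N != 1) :
  (forall h : nat, (1 <= h)%N -> forall n : nat,
     @multinom_prob R K h (pK mu) (fun a => @N1 K a == n)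
     = @multinom_prob R K h (pK mu) (fun a => @N2 K a == n)) /\
  (exists c1 c2 : R, 0 < c1 /\ 0 < c2 /\
     forall h : nat, (1 <= h)%N ->
       @multinom_prob R K h (pK mu) (fun a => ~~ @inJ R K h (sigma2 K mu) a)
       <= c1 * expR (- (c2 * powR h%:R (1 / 3)))).
Proof.
split=> [h _ n|]; first exact: multinom_prob_N1_N2.
have K_ge1 : 1 <= K%:R :> R by rewrite ler1n.
set c2 : R := 1 / (8 * K%:R ^+ 2).
exists 4, c2; do 2 split => //; first by rewrite divr_gt0 ?mulr_gt0 ?exprn_gt0 //; lra.
move=> h h_ge1; set u := powR h%:R (1 / 3); set s := sigma2 K mu.
have u_ge1 : 1 <= u by rewrite -(powRr0 h%:R) ler_powR ?ler1n //; lra.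
set t := 1 / (4 * K%:R ^+ 2 * u).
have t_def : t * (4 * K%:R ^+ 2 * u) = 1.
  by rewrite /t mul1r mulVf // !mulf_neq0 ?expf_neq0 //; apply/eqP; lra.
have [t_ge0 tK_le exponentE] := chernoff_parameter K_ge1 u_ge1 t_def.
have p_ge0 (i : IK K) : 0 <= pK mu i := Hmu_ge0 _.
have tail (w : IK K -> nat) tt : (forall i, w i <= K)%N ->
    weight_mean (pK mu) w = s / 2 -> tt ^+ 2 = t ^+ 2 ->
    multinom_prob h (pK mu) (scaled_dev_ge h w (s / 2) tt (t * powR h%:R (2 / 3)))
    <= expR (- (c2 * u)).
  move=> w_le <- tt2; rewrite powR_two_thirds -/u -exponentE powR_third_expr3 // exprMn -tt2 -exprMn.
  by apply: (weighted_count_tail h p_ge0 (pK_sum Hmu_mean) w_le); rewrite exprMn tt2 -exprMn.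
have mean1 := weight_mean_IK_weight1 Hmu_sum Hmu_mean.
have mean2 := weight_mean_IK_weight2 Hmu_sum Hmu_mean.
apply: le_trans (multinom_prob_le_sum p_ge0 (fun a => not_inJ_scaled_dev (s := s) (a := a) t_ge0)) _.
rewrite !big_cons big_nil.
have := tail _ t (@IK_weight1_le K) mean1 erefl.
have := tail _ (- t) (@IK_weight1_le K) mean1 (sqrrN t).
have := tail _ t (@IK_weight2_le K) mean2 erefl.
have := tail _ (- t) (@IK_weight2_le K) mean2 (sqrrN t).
lra.
Qed.
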